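(* Let $\Omega$ be a finite set, $(H_i\mid i\in\Omega)$ finite abelian groups with $|H_i|\geqslant2$ for all $i$, $\mathbf{H}=\prod_{i\in\Omega}H_i$, $\mathbf{P}=(\Omega,\preccurlyeq_{\mathbf{P}})$ a poset, and $\Lambda$ the dual partition of $\mathcal{Q}(\mathbf{H},\mathbf{P})$. Let $\alpha,\gamma\in\hat{\mathbf{H}}$ lie in the same block of $\Lambda$, and let $D=\langle\mathrm{supp}(\alpha)\rangle_{\overline{\mathbf{P}}}$, $B=\langle\mathrm{supp}(\gamma)\rangle_{\overline{\mathbf{P}}}$. Then $|D|-|\min_{\mathbf{P}}(D)|=|B|-|\min_{\mathbf{P}}(B)|$.
   Context: $\hat{\mathbf{H}}$ is the character group of $\mathbf{H}$, identified with $\prod_i\hat{H_i}$ via $\alpha(\beta)=\prod_i\alpha_{(i)}(\beta_{(i)})$; $\mathrm{supp}$ of a codeword is the set of coordinates where it is not the identity. $\min_{\mathbf{P}}(B)$ is the set of minimal elements of $B$ in $\mathbf{P}$. For a poset $\mathbf{Q}$ on $\Omega$, $\langle B\rangle_{\mathbf{Q}}$ is the down-closure of $B$ and $\mathrm{wt}_{\mathbf{Q}}(\beta)=|\langle\mathrm{supp}(\beta)\rangle_{\mathbf{Q}}|$; $\overline{\mathbf{P}}$ is the dual poset. $\mathcal{Q}(\mathbf{H},\mathbf{P})$ is the partition of $\mathbf{H}$ into classes of equal $\mathbf{P}$-weight, and $\Lambda$ is the partition of $\hat{\mathbf{H}}$ with $\chi\sim\psi$ iff $\sum_{b\in B}\chi(b)=\sum_{b\in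 B}\psi(b)$ for every block $B$ of $\mathcal{Q}(\mathbf{H},\mathbf{P})$. *)

From HB Require Import structures.
From mathcomp Require Import all_boot all_order all_algebra all_field.
Set Implicit Arguments. Unset Strict Implicit. Unset Printing Implicit Defensive.
Import Order.TTheory GRing.Theory Num.Theory.
Local Open Scope ring_scope.

(* The finite abelian groups H_i are finite Z-modules (written additively).
   The ambient group H = prod_i H_i is the finite type of dependent finite
   functions {dffun forall i, H i}. *)
Definition codeword (Omega : finType) (H : Omega -> finZmodType) :=
  {dffun forall i : Omega, H i}.

Definition is_character (G : finZmodType) (f : G -> algC) : Prop :=
  f 0 = 1 /\ forall x y : G, f (x + y) = f x * f y.

(* An element of \hat H, identified with prod_i \hat H_i. *)
Definition is_Hchar (Omega : finType) (H : Omega -> finZmodType)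
  (alpha : forall i : Omega, H i -> algC) : Prop :=
  forall i, is_character (alpha i).

Definition char_eval (Omega : finType) (H : Omega -> finZmodType)
  (alpha : forall i : Omega, H i -> algC) (beta : codeword H) : algC :=
  \prod_(i : Omega) alpha i (beta i).

Definition supp (Omega : finType) (H : Omega -> finZmodType) (beta : codeword H)
  : {set Omega} := [set i | beta i != 0].
Definition char_supp (Omega : finType) (H : Omega -> finZmodType)
  (alpha : forall i : Omega, H i -> algC) : {set Omega} :=
  [set i | [exists x : H i, alpha i x != 1]].

Definition is_poset (Omega : finType) (le : rel Omega) : Prop :=
  reflexive le /\ antisymmetric le /\ transitive le.

Definition dual_rel (Omega : finType) (le : rel Omega) : rel Omega :=
  fun x y => le y x.

Definition ideal_of (Omega : finType) (le : rel Omega) (B : {set Omega}) : {set Omega} :=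
  [set j | [exists i in B, le j i]].

Definition wtP (Omega : finType) (H : Omega -> finZmodType) (le : rel Omega)
  (beta : codeword H) : nat := #|ideal_of le (supp beta)|.

Definition minP (Omega : finType) (le : rel Omega) (B : {set Omega}) : {set Omega} :=
  [set i in B | [forall j in B, le j i ==> (j == i)]].

(* chi ~ psi in Lambda: equal sums over every block of Q(H,P); the blocks are
   the nonempty classes {beta | wt_P(beta) = k}, and for empty classes both
   sums are 0, so quantifying over all k : nat is the same condition. *)
Definition same_Lambda_block (Omega : finType) (H : Omega -> finZmodType)
  (le : rel Omega) (chi psi : forall i : Omega, H i -> algC) : Prop :=
  forall k : nat,
    \sum_(b : codeword H | wtP le b == k) char_eval chi b =
    \sum_(b : codeword H | wtP le b == k) char_eval psi b.

From mathcomp Require Import all_boot all_order all_algebra all_field.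
Set Implicit Arguments. Unset Strict Implicit. Unset Printing Implicit Defensive.
Import Order.TTheory GRing.Theory Num.Theory.
Local Open Scope ring_scope.

(* Let alpha have support S and let D be the up-set generated by S.  The sum of
   alpha over the codewords b with <supp b>_P = I vanishes as soon as some s in S
   lies strictly below an element of I, since the coordinate s is then free.  So
   only the ideals I contained in I0 = {x | no element of S is strictly below x}
   contribute, and I0 is the complement of D minus min_P(D).  For I = I0 the sum
   factorises over the coordinates, and every factor is nonzero because
   |H_i| >= 2.  Hence |I0| = |Omega| - (|D| - |min_P(D)|) is the largest weight
   on whose class the sum of alpha is nonzero, an invariant of the Lambda-block. *)

Lemma sum_eq0_scaled_by_injection (R : idomainType) (T : finType) (P : pred T)
    (f : T -> R) (h : T -> T) (c : R) :
  injective h -> (forall x, P (h x) = P x) -> (forall x, f (h x) = c * f x) ->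
  c != 1 -> \sum_(x | P x) f x = 0.
Proof.
move=> h_inj Ph fh c_neq1; set S := \sum_(x | P x) f x.
have S_fixed : S = c * S.
  by rewrite mulr_sumr /S (reindex_inj h_inj); apply: eq_big => x; rewrite ?Ph ?fh.
have : (1 - c) * S = 0 by rewrite mulrBl mul1r -S_fixed subrr.
by move/eqP; rewrite mulf_eq0 subr_eq0 eq_sym (negbTE c_neq1) => /eqP.
Qed.

Lemma sum_character_eq0 (G : finZmodType) (f : G -> algC) (x0 : G) :
  is_character f -> f x0 != 1 -> \sum_x f x = 0.
Proof.
by move=> [_ fD] fx0; apply: (sum_eq0_scaled_by_injection (addrI x0) _ (fD x0) fx0).
Qed.

Lemma bigA_distr_dffun (R : comPzSemiRingType) (I : finType) (T_ : I -> finType)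
    (F : forall i, T_ i -> R) :
  \sum_(b : {dffun forall i, T_ i}) \prod_i F i (b i) =
  \prod_i \sum_(x : T_ i) F i x.
Proof.
pose F' i := [ffun x => F i x].
rewrite [RHS](eq_bigr (fun i => \sum_(j in tagged_with T_ i) untag 0 (F' i) j));
  last by move=> i _; rewrite -(big_tag (fun k x => F' k x)); apply: eq_bigr => x _;
          rewrite ffunE.
rewrite bigA_distr_big_dep -(big_fprod _ _ F').
rewrite (reindex (@dffun_of_fprod _ T_)); last exact/onW_bij/dffun_of_fprod_bij.
by apply: eq_bigr => t _; apply: eq_bigr => i _; rewrite !ffunE.
Qed.

Lemma big_distr_dffun (R : comPzSemiRingType) (I : finType) (T_ : I -> finType)
    (P : forall i, pred (T_ i)) (F : forall i, T_ i -> R) :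
  \sum_(b : {dffun forall i, T_ i} | [forall i, P i (b i)]) \prod_i F i (b i) =
  \prod_i \sum_(x | P i x) F i x.
Proof.
under [RHS]eq_bigr do rewrite big_mkcond.
rewrite -bigA_distr_dffun big_mkcond; apply: eq_bigr => b _.
case: (boolP [forall i, P i (b i)]) => [/forallP Pb | /forallPn [i /negbTE Pbi]].
  by apply: eq_bigr => i _; rewrite Pb.
by rewrite (bigD1 i) //= Pbi mul0r.
Qed.

Section Characters.

Variables (Omega : finType) (H : Omega -> finZmodType).
Variable alpha : forall i : Omega, H i -> algC.
Arguments alpha : clear implicits.
Hypothesis halpha : is_Hchar alpha.

Lemma notin_char_supp (i : Omega) (x : H i) :
  i \notin char_supp alpha -> alpha i x = 1.
Proof. by rewrite /char_supp inE => /existsPn /(_ x); rewrite negbK => /eqP. Qed.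

(* Translating the m-th coordinate by some x0 with alpha_m(x0) <> 1 scales every
   term by alpha_m(x0) and preserves P. *)
Lemma sum_char_eval_free_coord_eq0 m (P : pred (codeword H)) :
  m \in char_supp alpha ->
  (forall b b' : codeword H, (forall i, i != m -> b i = b' i) -> P b = P b') ->
  \sum_(b | P b) char_eval alpha b = 0.
Proof.
rewrite inE => /existsP [x0 alpha_x0] P_m.
pose d i : H i := dfwith (fun j : Omega => 0 : H j) x0 i.
have d_out i : i != m -> d i = 0 by move=> im; rewrite /d dfwith_out // eq_sym.
have alpha_d : \prod_i alpha i (d i) = alpha m x0.
  rewrite (bigD1 m) //= big1 => [|i im]; first by rewrite mulr1 /d dfwith_in.
  by rewrite d_out //; case: (halpha i).
apply: (sum_eq0_scaled_by_injection (f := char_eval alpha)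
    (h := fun b => [ffun i => b i + d i]) _ _ _ alpha_x0)
  => [b1 b2 /ffunP eq_b | b | b].
- by apply/ffunP => i; have := eq_b i; rewrite !ffunE => /addIr.
- by apply: P_m => i im; rewrite ffunE d_out ?addr0.
rewrite /char_eval -alpha_d -big_split /=; apply: eq_bigr => i _.
by rewrite ffunE (proj2 (halpha i)) mulrC.
Qed.

Lemma sum_char_eval_pattern_neq0 (Z N : {set Omega}) :
  (forall i : Omega, (1 < #|{: H i}|)%N) ->
  [disjoint Z & N] -> char_supp alpha \subset Z :|: N ->
  \sum_(b : codeword H | [forall i, ((i \in Z) ==> (b i == 0)) &&
                                    ((i \in N) ==> (b i != 0))])
     char_eval alpha b != 0.
Proof.
move=> hH ZN_dis S_ZN; rewrite /char_eval (big_distr_dffun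
  (fun i x => ((i \in Z) ==> (x == 0)) && ((i \in N) ==> (x != 0)))).
(* The factor at i is 1 on Z, -1 on N meeting supp alpha, and otherwise alpha_i
   is trivial and the factor counts a nonempty set. *)
apply/prodf_neq0 => i _.
have [iZ | iZ] := boolP (i \in Z).
  have iN : i \notin N by rewrite (disjointFr ZN_dis iZ).
  rewrite (big_pred1 0) => [|x]; last by rewrite /= (negbTE iN) andbT.
  by case: (halpha i) => ->; rewrite oner_eq0.
have [iS | iS] := boolP (i \in char_supp alpha).
  have iN : i \in N by have := subsetP S_ZN i iS; rewrite inE (negbTE iZ).
  rewrite (eq_bigl (predC1 0)) => [|x]; last by rewrite /= iN.
  move: (iS); rewrite inE => /existsP [x0 alpha_x0].
  have := sum_character_eq0 (halpha i) alpha_x0; rewrite (bigD1 0) //=.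
  case: (halpha i) => -> _ /eqP; rewrite addrC addr_eq0 => /eqP ->.
  by rewrite oppr_eq0 oner_eq0.
rewrite (eq_bigr (fun=> 1)) => [|x _]; last exact: notin_char_supp.
rewrite sumr_const pnatr_eq0 -lt0n; apply/card_gt0P.
have [iN | iN] := boolP (i \in N); last by exists 0.
have [x [y [_ _ xy]]] := card_gt1P (hH i).
have [x0 | nz_x] := eqVneq x 0; last by exists x.
by exists (y : H i); rewrite unfold_in /= -x0 eq_sym.
Qed.

End Characters.

Section Poset.

Variables (Omega : finType) (le : rel Omega).
Hypothesis hP : is_poset le.

Let le_refl : reflexive le. Proof. by case: hP. Qed.
Let le_anti : antisymmetric le. Proof. by case: hP => _ []. Qed.
Let le_trans : transitive le. Proof. by case: hP => _ []. Qed.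

Definition not_strictly_above (S : {set Omega}) : {set Omega} :=
  [set x | [forall s in S, le s x ==> (s == x)]].

Lemma setC_not_strictly_above S :
  let D := ideal_of (dual_rel le) S in
  ~: not_strictly_above S = D :\: minP le D.
Proof.
move=> D; apply/setP => x; rewrite in_setC in_setD inE negb_forall_in.
apply/existsP/andP
  => [[s /andP [sS]] | [x_nmin /[!inE] /existsP [s /andP [sS le_sx]]]].
  rewrite negb_imply => /andP [le_sx ne_sx].
  have sD : s \in D.
    by rewrite inE; apply/existsP; exists s; rewrite sS /dual_rel le_refl.
  split; last by rewrite inE; apply/existsP; exists s; rewrite sS.
  by rewrite inE negb_and negb_forall_in; apply/orP; right; apply/existsP;
    exists s; rewrite sD le_sx.
move: x_nmin; rewrite inE negb_and => /orP [/negP [] | ].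
  by rewrite inE; apply/existsP; exists s; rewrite sS.
rewrite negb_forall_in
  => /existsP [j /andP [/[!inE] /existsP [s' /andP [s'S le_s'j]]]].
rewrite negb_imply => /andP [le_jx ne_jx].
exists s'; rewrite s'S /= negb_imply (le_trans le_s'j le_jx) /=.
apply: contra ne_jx => /eqP eq_s'x; apply/eqP/le_anti.
by rewrite le_jx -eq_s'x.
Qed.

Lemma card_ideal_dual_subn_minP S :
  let D := ideal_of (dual_rel le) S in
  (#|D| - #|minP le D| = #|Omega| - #|not_strictly_above S|)%N.
Proof.
move=> D; have min_sub : minP le D \subset D by apply/subsetP => x /setIdP [].
rewrite [in RHS]cardsCs subKn ?max_card // setC_not_strictly_above -/D.
by rewrite cardsD (setIidPr min_sub).
Qed.

Lemma ideal_not_strictly_above_sub (S : {set Omega}) :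
  ideal_of le (not_strictly_above S) \subset not_strictly_above S.
Proof.
apply/subsetP => j /[!inE] /existsP [x /andP [/[!inE] /forall_inP x_nsa le_jx]].
apply/forall_inP => s sS; apply/implyP => le_sj.
have /eqP eq_sx := implyP (x_nsa s sS) (le_trans le_sj le_jx).
by apply/eqP/le_anti; rewrite le_sj eq_sx.
Qed.

Lemma maximal_not_strictly_above (S : {set Omega}) s :
  s \in S -> s \in not_strictly_above S ->
  s \in minP (dual_rel le) (not_strictly_above S).
Proof.
move=> sS s_nsa; rewrite inE s_nsa; apply/forall_inP => j /[!inE] /forall_inP j_nsa.
by apply/implyP => le_sj; rewrite eq_sym; exact: implyP (j_nsa s sS) le_sj.
Qed.

(* A maximal element above j is one whose principal ideal is largest. *)
Lemma exists_maximal (I : {set Omega}) j :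
  j \in I -> exists2 m, m \in minP (dual_rel le) I & le j m.
Proof.
move=> jI; have Pj : (j \in I) && le j j by rewrite jI le_refl.
have [m /andP [mI le_jm] m_max] := @arg_maxnP _ j
  (fun k => (k \in I) && le j k) (fun k => #|[set y | le y k]|) Pj.
exists m => //; rewrite inE mI; apply/forall_inP => k kI; apply/implyP => le_mk.
rewrite /dual_rel in le_mk; apply/eqP/le_anti; rewrite le_mk andbT.
apply: contraLR (m_max k _) => [nle_km|]; last by rewrite kI (le_trans le_jm le_mk).
rewrite -ltnNge; apply: proper_card; rewrite properE; apply/andP; split.
  by apply/subsetP => y /[!inE] le_ym; exact: le_trans le_ym le_mk.
by apply/subsetPn; exists k; rewrite inE ?le_refl.
Qed.

Section Codewords.

Variable H : Omega -> finZmodType.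

Lemma ideal_supp_eqE (b : codeword H) (I : {set Omega}) :
  ideal_of le I \subset I ->
  (ideal_of le (supp b) == I) =
  [forall i, ((i \in ~: I) ==> (b i == 0)) &&
             ((i \in minP (dual_rel le) I) ==> (b i != 0))].
Proof.
move=> I_down; apply/eqP/forallP => [<- i | b_pat].
  apply/andP; split; apply/implyP.
    rewrite in_setC; apply: contraR => b_i; rewrite inE; apply/existsP.
    by exists i; rewrite inE b_i le_refl.
  case/setIdP => /[!inE] /existsP [k /andP [b_k le_ik]] /forall_inP i_max.
  have k_ideal : k \in ideal_of le (supp b).
    by rewrite inE; apply/existsP; exists k; rewrite b_k le_refl.
  by have /eqP <- := implyP (i_max k k_ideal) le_ik; rewrite inE in b_k.
apply/eqP; rewrite eqEsubset; apply/andP; split; apply/subsetP => x.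
  rewrite inE => /existsP [k /andP [b_k le_xk]].
  have kI : k \in I.
    apply: contraT => kNI; have /andP [/implyP b_k0 _] := b_pat k.
    by move: b_k; rewrite inE b_k0 ?inE.
  by apply: (subsetP I_down); rewrite inE; apply/existsP; exists k; rewrite kI.
move=> xI; have [m m_max le_xm] := exists_maximal xI.
rewrite inE; apply/existsP; exists m; rewrite le_xm andbT inE.
by have /andP [_ /implyP ->] := b_pat m.
Qed.

Lemma ideal_supp_sub_agree_off (b b' : codeword H) s t :
  (forall i, i != s -> b i = b' i) -> le s t -> s != t ->
  t \in ideal_of le (supp b) -> ideal_of le (supp b) \subset ideal_of le (supp b').
Proof.
move=> eq_off le_st ne_st /[!inE] /existsP [u /andP [/[!inE] b_u le_tu]].
have ne_us : u != s.
  by apply: contra ne_st => /eqP eq_us; apply/eqP/le_anti; rewrite le_st -eq_us.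
apply/subsetP => j /[!inE] /existsP [i /andP [/[!inE] b_i le_ji]]; apply/existsP.
have [eq_is | ne_is] := eqVneq i s.
  exists u; rewrite inE -eq_off // b_u.
  by rewrite (le_trans le_ji) // eq_is (le_trans le_st).
by exists i; rewrite inE -eq_off // b_i.
Qed.

Lemma sum_wtP_ideal_supp (F : codeword H -> algC) k :
  \sum_(b : codeword H | wtP le b == k) F b =
  \sum_(I : {set Omega} | #|I| == k) \sum_(b | ideal_of le (supp b) == I) F b.
Proof.
rewrite (partition_big (fun b => ideal_of le (supp b)) (fun I => #|I| == k)) //=.
apply: eq_bigr => I /eqP card_I; apply: eq_bigl => b.
rewrite /wtP; have [-> | _] := eqVneq (ideal_of le (supp b)) I.
  by rewrite card_I eqxx.
by rewrite andbF.
Qed.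

Variable alpha : forall i : Omega, H i -> algC.
Arguments alpha : clear implicits.
Hypothesis halpha : is_Hchar alpha.

(* As s lies below t in I, the coordinate b_s does not affect whether
   <supp b> = I. *)
Lemma sum_ideal_supp_eq0 (I : {set Omega}) s t :
  s \in char_supp alpha -> t \in I -> le s t -> s != t ->
  \sum_(b : codeword H | ideal_of le (supp b) == I) char_eval alpha b = 0.
Proof.
move=> sS tI le_st ne_st.
apply: (sum_char_eval_free_coord_eq0 halpha sS) => b b' eq_off.
have stable (c c' : codeword H) : (forall i, i != s -> c i = c' i) ->
    ideal_of le (supp c) == I -> ideal_of le (supp c') == I.
  move=> eq_cc' /eqP def_I; have t_c : t \in ideal_of le (supp c) by rewrite def_I.
  have sub := ideal_supp_sub_agree_off eq_cc' le_st ne_st t_c.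
  rewrite -def_I eqEsubset sub andbT.
  by apply: ideal_supp_sub_agree_off le_st ne_st (subsetP sub t t_c) => i /eq_cc'.
by apply/idP/idP; apply: stable => // i /eq_off.
Qed.

Lemma sum_ideal_supp_neq0_sub (I : {set Omega}) :
  \sum_(b : codeword H | ideal_of le (supp b) == I) char_eval alpha b != 0 ->
  I \subset not_strictly_above (char_supp alpha).
Proof.
move=> nz; apply/subsetP => t tI; rewrite inE; apply/forall_inP => s sS.
apply/implyP => le_st; apply: contraTT nz => ne_st.
by rewrite negbK (sum_ideal_supp_eq0 sS tI le_st ne_st).
Qed.

Lemma sum_wtP_eq0 k :
  (#|not_strictly_above (char_supp alpha)| < k)%N ->
  \sum_(b : codeword H | wtP le b == k) char_eval alpha b = 0.
Proof.
move=> lt_k; rewrite sum_wtP_ideal_supp big1 // => I /eqP card_I.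
apply/eqP; apply: contraLR lt_k => /sum_ideal_supp_neq0_sub/subset_leq_card.
by rewrite card_I -leqNgt.
Qed.

Lemma sum_wtP_top_neq0 :
  (forall i : Omega, (1 < #|{: H i}|)%N) ->
  \sum_(b : codeword H | wtP le b == #|not_strictly_above (char_supp alpha)|)
     char_eval alpha b != 0.
Proof.
move=> hH; set I0 := not_strictly_above _.
rewrite sum_wtP_ideal_supp (bigD1 I0) //= [X in _ + X]big1 ?addr0
  => [|I /andP [/eqP card_I ne_I]]; last first.
  apply: contraTeq ne_I => /sum_ideal_supp_neq0_sub sub.
  by rewrite negbK eqEcard sub card_I leqnn.
rewrite (eq_bigl _ _ (fun b => ideal_supp_eqE b (ideal_not_strictly_above_sub _))).
apply: sum_char_eval_pattern_neq0 => //.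
  by rewrite disjoint_sym disjoints_subset setCK; apply/subsetP => i /setIdP [].
apply/subsetP => s sS; rewrite in_setU in_setC.
by case: (boolP (s \in I0)) => //= s_I0; exact: maximal_not_strictly_above.
Qed.

End Codewords.

End Poset.

Lemma card_not_strictly_above_supp_le (Omega : finType) (H : Omega -> finZmodType)
    (le : rel Omega) (alpha gamma : forall i : Omega, H i -> algC) :
  (forall i : Omega, (1 < #|{: H i}|)%N) -> is_poset le ->
  is_Hchar alpha -> is_Hchar gamma -> same_Lambda_block le alpha gamma ->
  (#|not_strictly_above le (char_supp gamma)| <=
   #|not_strictly_above le (char_supp alpha)|)%N.
Proof.
move=> hH hP halpha hgamma hblock; rewrite leqNgt; apply/negP => lt_ag.
by have := sum_wtP_top_neq0 hP hgamma hH; rewrite -hblock sum_wtP_eq0 ?eqxx.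
Qed.

Unset Implicit Arguments.

Theorem proposition2p3 (Omega : finType) (H : Omega -> finZmodType)
  (le : rel Omega)
  (hH : forall i : Omega, (1 < #|{: H i}|)%N)
  (hP : is_poset le)
  (alpha gamma : forall i : Omega, H i -> algC)
  (halpha : is_Hchar alpha) (hgamma : is_Hchar gamma)
  (hblock : same_Lambda_block le alpha gamma) :
  let D := ideal_of (dual_rel le) (char_supp alpha) in
  let B := ideal_of (dual_rel le) (char_supp gamma) in
  (#|D| - #|minP le D| = #|B| - #|minP le B|)%N.
Proof.
move=> D B; rewrite /D /B !card_ideal_dual_subn_minP //; congr (_ - _)%N.
have hblock' : same_Lambda_block le gamma alpha by move=> k; rewrite hblock.
by apply/eqP; rewrite eqn_leq !card_not_strictly_above_supp_le.
Qed.
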